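(* Let $(A,\succ,\prec)$ be an anti-pre-Novikov algebra and $s\in A\otimes A$, and write $T=T_{s+\tau(s)}$. The following are equivalent: (a) $s+\tau(s)$ is invariant; (b) $T(L_{\succ}^*(x)\zeta)+L_{\star}(x)T(\zeta)=0$ and $T(L_{\circ}^*(x)\zeta)+L_{\odot}(x)T(\zeta)=0$ for all $x\in A,\zeta\in A^*$; (c) $L_{\succ}(x)T(\zeta)+T(L_{\star}^*(x)\zeta)=0$ and $T(L_{\odot}^*(x)\zeta)+L_{\circ}(x)T(\zeta)=0$ for all $x\in A,\zeta\in A^*$; (d) $L_{\star}^*(T(\zeta))\eta=R_{\succ}^*(T(\eta))\zeta$ and $R_{\odot}^*(T(\zeta))\eta=R_{\circ}^*(T(\eta))\zeta$ for all $\zeta,\eta\in A^*$.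
   Context: $A$ is finite-dimensional over a field $k$. An anti-pre-Novikov algebra is $(A,\succ,\prec)$ such that with $x\circ y=x\succ y+x\prec y$: $(x\circ y-y\circ x)\succ z=y\succ(x\succ z)-x\succ(y\succ z)$; $x\prec(y\circ z)=(y\succ x)\prec z-(x\prec y)\prec z-y\succ(x\prec z)$; $(x\circ y)\succ z=-(x\succ z)\prec y$; $(x\prec y)\prec z=(x\prec z)\prec y$; $(x\circ y-y\circ x)\prec z=x\succ(y\circ z)-y\succ(x\circ z)$. Notation: $L_\ast(x)y=x\ast y$, $R_\ast(x)y=y\ast x$ for $\ast\in\{\succ,\prec,\circ\}$; $L_{\star}=L_{\circ}+R_{\circ}$, $L_{\odot}=L_{\succ}+R_{\prec}$, $R_{\odot}=R_{\succ}+L_{\prec}$; for $f:A\to\mathrm{End}(A)$, $\langle f^*(x)\zeta,y\rangle=-\langle\zeta,f(x)y\rangle$; $\tau$ is the flip; for $r\in A\otimes A$, $T_r:A^*\to A$ is $\langle T_r(\zeta),\eta\rangle=\langle r,\zeta\otimes\eta\rangle$. An element $r\in A\otimes A$ is invariant if $(I\otimes L_{\star}(x)-L_{\succ}(x)\otimes I)r=0$ and $(L_{\circ}(x)\otimes I-I\otimes L_{\odot}(x))r=0$ for all $x\in A$. *)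

(* The finite-dimensional algebra A over the field K is
   modelled in coordinates as 'rV[K]_n (a basis e_0..e_{n-1} fixed);
   A^star is also 'rV[K]_n with the pairing <zeta, x> = sum_i zeta_i x_i;
   A (x) A is 'M[K]_n, the matrix r standing for sum_{i,j} r i j e_i (x) e_j. *)
From HB Require Import structures.
From mathcomp Require Import all_boot all_order all_algebra.
Set Implicit Arguments. Unset Strict Implicit. Unset Printing Implicit Defensive.
Import Order.TTheory GRing.Theory Num.Theory.
Local Open Scope ring_scope.

Section Defs.
Variables (K : fieldType) (n : nat).
Local Notation V := 'rV[K]_n.

Definition bvec (i : 'I_n) : V := delta_mx 0 i.

Definition bil (c : 'I_n -> 'I_n -> V) (x y : V) : V :=
  \sum_(i < n) \sum_(j < n) (x 0 i * y 0 j) *: c i j.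

Definition pairing (zeta x : V) : K := \sum_(i < n) zeta 0 i * x 0 i.

Section Ops.
Variables (succ prec : V -> V -> V).
Definition circ (x y : V) : V := succ x y + prec x y.

Definition anti_pre_Novikov : Prop :=
  (forall x y z, succ (circ x y - circ y x) z = succ y (succ x z) - succ x (succ y z)) /\
  (forall x y z, prec x (circ y z) =
                 prec (succ y x) z - prec (prec x y) z - succ y (prec x z)) /\
  (forall x y z, succ (circ x y) z = - prec (succ x z) y) /\
  (forall x y z, prec (prec x y) z = prec (prec x z) y) /\
  (forall x y z, prec (circ x y - circ y x) z = succ x (circ y z) - succ y (circ x z)).

Definition Lop (m : V -> V -> V) (x : V) : V -> V := fun y => m x y.
Definition Rop (m : V -> V -> V) (x : V) : V -> V := fun y => m y x.
Definition addop (f g : V -> V -> V) (x : V) : V -> V := fun y => f x y + g x y.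

Definition L_succ := Lop succ.
Definition R_succ := Rop succ.
Definition L_prec := Lop prec.
Definition R_prec := Rop prec.
Definition L_circ := Lop circ.
Definition R_circ := Rop circ.
Definition L_star := addop L_circ R_circ.
Definition L_odot := addop L_succ R_prec.
Definition R_odot := addop R_succ L_prec.
End Ops.

(* dual operator f^star : A -> End(A^star),  <f^star(x) zeta, y> = - <zeta, f(x) y> *)
Definition dualop (f : V -> V -> V) (x zeta : V) : V :=
  \row_(i < n) - pairing zeta (f x (bvec i)).

Definition flip (r : 'M[K]_n) : 'M[K]_n := r^T.

(* (f (x) g) r, for linear maps f g : A -> A *)
Definition tapp (f g : V -> V) (r : 'M[K]_n) : 'M[K]_n :=
  \matrix_(a < n, b < n)
    \sum_(i < n) \sum_(j < n) r i j * (f (bvec i)) 0 a * (g (bvec j)) 0 b.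

(* T_r : A^star -> A,  <T_r(zeta), eta> = <r, zeta (x) eta> *)
Definition Tmap (r : 'M[K]_n) (zeta : V) : V :=
  \row_(j < n) \sum_(i < n) zeta 0 i * r i j.

Definition invariant_tensor (succ prec : V -> V -> V) (r : 'M[K]_n) : Prop :=
  forall x : V,
    tapp id (L_star succ prec x) r - tapp (L_succ succ x) id r = 0 /\
    tapp (L_circ succ prec x) id r - tapp id (L_odot succ prec x) r = 0.

End Defs.

(* Work in coordinates and let R be the matrix of s + tau(s), which is symmetric.
   Then T_R is zeta |-> zeta R, the dual f^*(x) of an operator with matrix F is
   zeta |-> - zeta F^T, and (f (x) g) r = F^T r G.  Hence each of (a), (b), (c)
   says, up to sign and transposition (which only uses R^T = R), that
   R S_x - N_x^T R = 0 and R P_x - C_x^T R = 0 for all x, where N_x, S_x, C_x, P_x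
   are the matrices of L_succ(x), L_star(x), L_circ(x), L_odot(x).  Read at the
   j-th coordinate, (d) says the same for x = e_j, because
   L_star(u) e_j = L_star(e_j) u, R_succ(u) e_j = L_succ(e_j) u,
   R_odot(u) e_j = L_odot(e_j) u and R_circ(u) e_j = L_circ(e_j) u; both defects
   are linear in x. *)

From HB Require Import structures.
From mathcomp Require Import all_boot all_order all_algebra.
Set Implicit Arguments. Unset Strict Implicit. Unset Printing Implicit Defensive.
Import Order.TTheory GRing.Theory Num.Theory.
Local Open Scope ring_scope.

Section MatrixCalculus.
Variables (K : fieldType) (n : nat).
Local Notation V := 'rV[K]_n.
Implicit Types (F G : V -> V) (f g m : V -> V -> V) (c : 'I_n -> 'I_n -> V).
Implicit Types (R M N : 'M[K]_n) (u x y z w : V).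

Definition lin1_repr F := forall u, F u = u *m lin1_mx F.

Definition lin2_repr m := (forall x, lin1_repr (m x)) /\ (forall y, lin1_repr (m^~ y)).

Lemma lin1_mxD F G : lin1_mx (fun u => F u + G u) = lin1_mx F + lin1_mx G.
Proof. by apply/matrixP => i j; rewrite !mxE. Qed.

Lemma lin1_reprD F G : lin1_repr F -> lin1_repr G -> lin1_repr (fun u => F u + G u).
Proof. by move=> hF hG u; rewrite lin1_mxD mulmxDr -hF -hG. Qed.

Lemma lin1_mx_id : lin1_mx (@id V) = 1%:M.
Proof. by apply/matrixP => i j; rewrite !mxE eq_sym. Qed.

Lemma lin2_reprD m1 m2 :
  lin2_repr m1 -> lin2_repr m2 -> lin2_repr (fun x y => m1 x y + m2 x y).
Proof. by move=> [h1 h1'] [h2 h2']; split=> x; apply: lin1_reprD. Qed.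

Lemma lin2_repr_flip m : lin2_repr m -> lin2_repr (fun x y => m y x).
Proof. by case. Qed.

Lemma bil_delta_r c x j : bil c x (delta_mx 0 j) = \sum_i x 0 i *: c i j.
Proof.
apply: eq_bigr => i _; rewrite (bigD1 j) //= big1 => [|k /negbTE nkj].
  by rewrite mxE !eqxx mulr1 addr0.
by rewrite mxE eqxx nkj mulr0 scale0r.
Qed.

Lemma bil_delta_l c y i : bil c (delta_mx 0 i) y = \sum_j y 0 j *: c i j.
Proof.
rewrite /bil (bigD1 i) //= [X in _ + X]big1 => [|k /negbTE nki].
  by rewrite addr0; apply: eq_bigr => j _; rewrite mxE !eqxx mul1r.
by apply: big1 => j _; rewrite mxE eqxx nki mul0r scale0r.
Qed.

Lemma lin2_repr_bil c : lin2_repr (bil c).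
Proof.
split=> [x|y] u; apply/rowP => b; rewrite !mxE summxE.
  under [RHS]eq_bigr => j _ do rewrite mxE bil_delta_r summxE mulr_sumr.
  rewrite exchange_big; apply: eq_bigr => i _; rewrite summxE.
  by apply: eq_bigr => j _; rewrite !mxE mulrA [u 0 j * _]mulrC.
under [RHS]eq_bigr => i _ do rewrite mxE bil_delta_l summxE mulr_sumr.
apply: eq_bigr => i _; rewrite summxE.
by apply: eq_bigr => j _; rewrite !mxE mulrA.
Qed.

Lemma lin1_mx_lin2 m x :
  lin2_repr m -> lin1_mx (m x) = \sum_j x 0 j *: lin1_mx (m (delta_mx 0 j)).
Proof.
case=> _ hm; apply/matrixP => i b; rewrite summxE mxE (hm (delta_mx 0 i) x) mxE.
by apply: eq_bigr => j _; rewrite !mxE.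
Qed.


Lemma pairingE z x : pairing z x = (x *m z^T) 0 0.
Proof. by rewrite mxE; apply: eq_bigr => i _; rewrite mxE mulrC. Qed.

Lemma TmapE R z : Tmap R z = z *m R.
Proof. by apply/rowP => j; rewrite !mxE. Qed.

Lemma dualopE f x z : dualop f x z = - (z *m (lin1_mx (f x))^T).
Proof.
apply/rowP => j; rewrite !mxE pairingE mxE; congr (- _).
by apply: eq_bigr => i _; rewrite !mxE mulrC.
Qed.

Lemma tappE F G R : tapp F G R = (lin1_mx F)^T *m R *m lin1_mx G.
Proof.
apply/matrixP => a b; rewrite !mxE.
under [RHS]eq_bigr => j _ do rewrite mxE mulr_suml.
rewrite [RHS]exchange_big; apply: eq_bigr => i _; apply: eq_bigr => j _.
by rewrite !mxE [R i j * _]mulrC.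
Qed.

Lemma bilform_eq0P M : (forall z w, (z *m M *m w^T) 0 0 = 0) <-> M = 0.
Proof.
split=> [hM | -> z w]; last by rewrite mulmx0 mul0mx mxE.
apply/matrixP => a b; have := hM (delta_mx 0 a) (delta_mx 0 b).
by rewrite -rowE trmx_delta -colE !mxE.
Qed.

Lemma mulmx_eq0P M : (forall z, z *m M = 0) <-> M = 0.
Proof.
split=> [hM | -> z]; last exact: mulmx0.
by apply/eqP/mulmxP => z; rewrite hM mulmx0.
Qed.

(* If [M], [N] are the matrices of [f(x)], [g(x)], then [intertw_defect R M N] is the
   matrix of [T_R \o f^*(x) + g(x) \o T_R] (lemma [Tmap_dualopDE]). *)
Definition intertw_defect R M N := R *m N - M^T *m R.

Lemma intertw_defect_basisP R (M N : V -> 'M[K]_n) :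
    (forall x, M x = \sum_j x 0 j *: M (delta_mx 0 j)) ->
    (forall x, N x = \sum_j x 0 j *: N (delta_mx 0 j)) ->
  (forall j, intertw_defect R (M (delta_mx 0 j)) (N (delta_mx 0 j)) = 0) <->
  (forall x, intertw_defect R (M x) (N x) = 0).
Proof.
move=> hM hN; split=> [h0 x | h0 j //].
rewrite /intertw_defect hM hN mulmx_sumr linear_sum mulmx_suml -sumrB.
apply: big1 => j _; have := h0 j; rewrite /intertw_defect => h0j.
by rewrite -scalemxAr linearZ -scalemxAl -scalerBr h0j scaler0.
Qed.

Lemma Tmap_dualopDE R f g x z : lin1_repr (g x) ->
  Tmap R (dualop f x z) + g x (Tmap R z) =
  z *m intertw_defect R (lin1_mx (f x)) (lin1_mx (g x)).
Proof.
move=> hg; rewrite hg !TmapE dualopE /intertw_defect mulmxBr !mulmxA mulNmx.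
exact: addrC.
Qed.

Lemma Tmap_dualopD_eq0P R f g : (forall x, lin1_repr (g x)) ->
  (forall x z, Tmap R (dualop f x z) + g x (Tmap R z) = 0) <->
  (forall x, intertw_defect R (lin1_mx (f x)) (lin1_mx (g x)) = 0).
Proof.
move=> hg; split=> h x; [apply/mulmx_eq0P => z | move=> z].
  by rewrite -(Tmap_dualopDE R f z (hg x)) h.
by rewrite (Tmap_dualopDE R f z (hg x)) h mulmx0.
Qed.

Section SymmetricTensor.
Variable R : 'M[K]_n.
Hypothesis R_sym : R^T = R.

Lemma intertw_defectC M N : intertw_defect R N M = - (intertw_defect R M N)^T.
Proof. by rewrite /intertw_defect linearB /= !trmx_mul R_sym trmxK opprB. Qed.

Lemma intertw_defectC_eq0 M N :
  intertw_defect R N M = 0 <-> intertw_defect R M N = 0.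
Proof.
rewrite intertw_defectC; split=> [/eqP|->]; last by rewrite trmx0 oppr0.
by rewrite oppr_eq0 => /eqP/(congr1 trmx); rewrite trmxK trmx0.
Qed.

Lemma dualop_Tmap_swapP f g (A B : 'I_n -> 'M[K]_n) :
    (forall u j, f u (delta_mx 0 j) = u *m A j) ->
    (forall u j, g u (delta_mx 0 j) = u *m B j) ->
  (forall z w, dualop f (Tmap R z) w = dualop g (Tmap R w) z) <->
  (forall j, intertw_defect R (B j) (A j) = 0).
Proof.
move=> fA gB.
have subE k (X Y : 'M[K]_(1, k)) i : (X - Y) 0 i = X 0 i - Y 0 i by rewrite !mxE.
have dualop_diffE z w j : (dualop f (Tmap R z) w - dualop g (Tmap R w) z) 0 j =
    - (z *m intertw_defect R (B j) (A j) *m w^T) 0 0.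
  have tr00 (M : 'M[K]_1) : M 0 0 = M^T 0 0 by rewrite mxE.
  rewrite subE [dualop f _ _ 0 j]mxE [dualop g _ _ 0 j]mxE !pairingE fA gB !TmapE.
  rewrite [X in _ - - X]tr00 !trmx_mul trmxK R_sym /intertw_defect.
  by rewrite mulmxBr mulmxBl subE opprK opprB addrC !mulmxA.
split=> h.
  move=> j; apply/bilform_eq0P => z w; apply/eqP; rewrite -oppr_eq0 -dualop_diffE.
  by rewrite h subrr mxE.
move=> z w; apply/eqP; rewrite -subr_eq0; apply/eqP/rowP => j.
by rewrite dualop_diffE h mulmx0 mul0mx !mxE oppr0.
Qed.

Lemma dualop_Tmap_swap_lin2P f g m1 m2 : lin2_repr m1 -> lin2_repr m2 ->
    (forall u y, f u y = m2 y u) -> (forall u y, g u y = m1 y u) ->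
  (forall z w, dualop f (Tmap R z) w = dualop g (Tmap R w) z) <->
  (forall x, intertw_defect R (lin1_mx (m1 x)) (lin1_mx (m2 x)) = 0).
Proof.
move=> m1_lin m2_lin fm2 gm1.
apply: iff_trans (dualop_Tmap_swapP (A := fun j => lin1_mx (m2 (delta_mx 0 j)))
                                    (B := fun j => lin1_mx (m1 (delta_mx 0 j))) _ _) _.
- by move=> u j; rewrite fm2 -(proj1 m2_lin).
- by move=> u j; rewrite gm1 -(proj1 m1_lin).
- by apply: intertw_defect_basisP => x; apply: lin1_mx_lin2.
Qed.

End SymmetricTensor.
End MatrixCalculus.

Section InvariantTensor.
Variables (K : fieldType) (n : nat) (cs cp : 'I_n -> 'I_n -> 'rV[K]_n).
Local Notation succ := (bil cs).
Local Notation prec := (bil cp).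
Local Notation Ls := (L_succ succ).
Local Notation Lc := (L_circ succ prec).
Local Notation Lst := (L_star succ prec).
Local Notation Lo := (L_odot succ prec).

Lemma L_starC x y : Lst x y = Lst y x.
Proof. exact: addrC. Qed.

Lemma lin2_repr_L_succ : lin2_repr Ls.
Proof. exact: lin2_repr_bil. Qed.

Lemma lin2_repr_L_circ : lin2_repr Lc.
Proof. exact: lin2_reprD (lin2_repr_bil cs) (lin2_repr_bil cp). Qed.

Lemma lin2_repr_L_star : lin2_repr Lst.
Proof. exact: lin2_reprD lin2_repr_L_circ (lin2_repr_flip lin2_repr_L_circ). Qed.

Lemma lin2_repr_L_odot : lin2_repr Lo.
Proof. exact: lin2_reprD (lin2_repr_bil cs) (lin2_repr_flip (lin2_repr_bil cp)). Qed.

Variable R : 'M[K]_n.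
Hypothesis R_sym : R^T = R.

Local Notation inv_succ_star :=
  (forall x, intertw_defect R (lin1_mx (Ls x)) (lin1_mx (Lst x)) = 0).
Local Notation inv_circ_odot :=
  (forall x, intertw_defect R (lin1_mx (Lc x)) (lin1_mx (Lo x)) = 0).

Lemma invariant_tensorP :
  invariant_tensor succ prec R <-> inv_succ_star /\ inv_circ_odot.
Proof.
rewrite /invariant_tensor.
have tapp_succ_star x : tapp id (Lst x) R - tapp (Ls x) id R =
    intertw_defect R (lin1_mx (Ls x)) (lin1_mx (Lst x)).
  by rewrite !tappE lin1_mx_id trmx1 mul1mx mulmx1.
have tapp_circ_odot x : tapp (Lc x) id R - tapp id (Lo x) R =
    - intertw_defect R (lin1_mx (Lc x)) (lin1_mx (Lo x)).
  by rewrite !tappE lin1_mx_id trmx1 mul1mx mulmx1 opprB.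
split=> [h | [h1 h2] x]; last by rewrite tapp_succ_star tapp_circ_odot h1 h2 oppr0.
split=> x; have [e1 e2] := h x; first by rewrite -tapp_succ_star.
by apply/eqP; rewrite -oppr_eq0 -tapp_circ_odot e2.
Qed.

Lemma Tmap_dualop_L_succP :
  (forall x z, Tmap R (dualop Ls x z) + Lst x (Tmap R z) = 0) <-> inv_succ_star.
Proof. exact: (Tmap_dualopD_eq0P R Ls (proj1 lin2_repr_L_star)). Qed.

Lemma Tmap_dualop_L_circP :
  (forall x z, Tmap R (dualop Lc x z) + Lo x (Tmap R z) = 0) <-> inv_circ_odot.
Proof. exact: (Tmap_dualopD_eq0P R Lc (proj1 lin2_repr_L_odot)). Qed.

Lemma L_succ_Tmap_dualopP :
  (forall x z, Ls x (Tmap R z) + Tmap R (dualop Lst x z) = 0) <-> inv_succ_star.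
Proof.
have [to_defect of_defect] := Tmap_dualopD_eq0P R Lst (proj1 lin2_repr_L_succ).
split=> h x.
  by apply/(intertw_defectC_eq0 R_sym)/to_defect => y z; rewrite addrC.
move=> z; rewrite addrC; apply: of_defect => y.
exact/(intertw_defectC_eq0 R_sym).
Qed.

Lemma Tmap_dualop_L_odotP :
  (forall x z, Tmap R (dualop Lo x z) + Lc x (Tmap R z) = 0) <-> inv_circ_odot.
Proof.
have [to_defect of_defect] := Tmap_dualopD_eq0P R Lo (proj1 lin2_repr_L_circ).
split=> h x; first exact/(intertw_defectC_eq0 R_sym)/to_defect.
by apply: of_defect => y; apply/(intertw_defectC_eq0 R_sym).
Qed.

Lemma dualop_L_star_R_succP :
  (forall z w, dualop Lst (Tmap R z) w = dualop (R_succ succ) (Tmap R w) z) <->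
  inv_succ_star.
Proof.
by apply: (dualop_Tmap_swap_lin2P R_sym lin2_repr_L_succ lin2_repr_L_star L_starC).
Qed.

Lemma dualop_R_odot_R_circP :
  (forall z w, dualop (R_odot succ prec) (Tmap R z) w =
               dualop (R_circ succ prec) (Tmap R w) z) <->
  inv_circ_odot.
Proof.
by apply: (dualop_Tmap_swap_lin2P R_sym lin2_repr_L_circ lin2_repr_L_odot).
Qed.

End InvariantTensor.

Theorem mainTheorem10 (K : fieldType) (n : nat)
    (cs cp : 'I_n -> 'I_n -> 'rV[K]_n)
    (hA : anti_pre_Novikov (bil cs) (bil cp))
    (s : 'M[K]_n) :
  let succ := bil cs in
  let prec := bil cp in
  let T := Tmap (s + flip s) in
  let Pa := invariant_tensor succ prec (s + flip s) in
  let Pb := (forall (x zeta : 'rV[K]_n),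
               T (dualop (L_succ succ) x zeta) + L_star succ prec x (T zeta) = 0) /\
            (forall (x zeta : 'rV[K]_n),
               T (dualop (L_circ succ prec) x zeta) + L_odot succ prec x (T zeta) = 0) in
  let Pc := (forall (x zeta : 'rV[K]_n),
               L_succ succ x (T zeta) + T (dualop (L_star succ prec) x zeta) = 0) /\
            (forall (x zeta : 'rV[K]_n),
               T (dualop (L_odot succ prec) x zeta) + L_circ succ prec x (T zeta) = 0) in
  let Pd := (forall (zeta eta : 'rV[K]_n),
               dualop (L_star succ prec) (T zeta) eta = dualop (R_succ succ) (T eta) zeta) /\
            (forall (zeta eta : 'rV[K]_n),
               dualop (R_odot succ prec) (T zeta) eta = dualop (R_circ succ prec) (T eta) zeta) in
  (Pa <-> Pb) /\ (Pa <-> Pc) /\ (Pa <-> Pd).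
Proof.
cbv zeta.
have R_sym : (s + flip s)^T = s + flip s by rewrite /flip linearD /= trmxK addrC.
have := invariant_tensorP cs cp (s + flip s).
have := Tmap_dualop_L_succP cs cp (s + flip s).
have := Tmap_dualop_L_circP cs cp (s + flip s).
have := L_succ_Tmap_dualopP cs cp R_sym.
have := Tmap_dualop_L_odotP cs cp R_sym.
have := dualop_L_star_R_succP cs cp R_sym.
have := dualop_R_odot_R_circP cs cp R_sym.
tauto.
Qed.
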